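(* If $L\subseteq\Sigma^*$ belongs to $Pol(\mathcal{C}om)(\Sigma)$, then $N^1(L)=O(\log n)$.
   Context: Non-deterministic communication complexity: for $f:X\times Y\to\{0,1\}$, $N^1(f)$ is the minimum cost of a non-deterministic protocol for $f$; equivalently, up to an additive constant 2, $N^1(f)=\log_2 C^1(f)$, where $C^1(f)$ is the minimum number of rectangles $S\times T\subseteq X\times Y$ on which $f\equiv1$ whose union is $f^{-1}(1)$. For a language $L\subseteq\Sigma^*$, $N^1(L)(n)$ is $N^1$ of the function in which Alice receives $a_1,a_3,\dots,a_{2n-1}$, Bob receives $a_2,a_4,\dots,a_{2n}$, each $a_i\in\Sigma\cup\{\epsilon\}$ ($\epsilon$ the empty word), and the value is $1$ iff $a_1a_2\cdots a_{2n}\in L$. $\mathcal{C}om(\Sigma)$ denotes the set of regular languages over $\Sigma$ whose syntactic monoid ($\Sigma^*/\equiv_L$, where $x\equiv_L y$ iff $uxv\in L\Leftrightarrow uyv\in L$ for all $u,v$) is commutative. $Pol(\mathcal{C}om)(\Sigma)$ is the set of finite unions of languages of the form $L_0a_1L_1a_2\cdots a_kL_k$ with $k\ge0$, $a_i\in\Sigma$ and $L_i\in\mathcal{C}om(\Sigma)$. Asymptotics are as $n\to\infty$. *)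

From mathcomp Require Import all_boot.
From Stdlib Require Lists.List.
Set Implicit Arguments. Unset Strict Implicit. Unset Printing Implicit Defensive.

Section Lang.
Variable Sigma : finType.

Definition lang := seq Sigma -> bool.

Definition regular (L : lang) : Prop :=
  exists (Q : finType) (delta : Q -> Sigma -> Q) (q0 : Q) (F : pred Q),
    forall w, L w = F (foldl delta q0 w).

Definition synt_eq (L : lang) (x y : seq Sigma) : Prop :=
  forall u v, L (u ++ x ++ v) = L (u ++ y ++ v).

(* Com(Sigma): regular languages whose syntactic monoid is commutative,
   i.e. [x][y] = [y][x] in Sigma^*/==_L for all x y. *)
Definition Com (L : lang) : Prop :=
  regular L /\ forall x y, synt_eq L (x ++ y) (y ++ x).

Definition lconcat (A B : lang) : lang := fun w =>
  [exists i : 'I_(size w).+1, A (take i w) && B (drop i w)].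
Definition lletter (a : Sigma) : lang := fun w => w == [:: a].

Fixpoint monomial (L0 : lang) (s : seq (Sigma * lang)) : lang :=
  match s with
  | [::] => L0
  | (a, L1) :: s' => lconcat L0 (lconcat (lletter a) (monomial L1 s'))
  end.

Definition monomial_union (ms : seq (lang * seq (Sigma * lang))) : lang :=
  fun w => has (fun m => monomial m.1 m.2 w) ms.

Definition PolCom (L : lang) : Prop :=
  exists ms : seq (lang * seq (Sigma * lang)),
    List.Forall (fun m => Com m.1 /\ List.Forall (fun p => Com p.2) m.2) ms /\
    forall w, L w = monomial_union ms w.

End Lang.

Section Cover.
Variables X Y : finType.
Variable f : X -> Y -> bool.

Definition is_one_cover (C : {set {set X} * {set Y}}) : bool :=
  [forall R in C, [forall x in R.1, [forall y in R.2, f x y]]] &&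
  [forall x, [forall y, f x y ==> [exists R in C, (x \in R.1) && (y \in R.2)]]].

Lemma one_cover_exists : exists k, [exists C, is_one_cover C && (#|C| == k)].
Proof.
set C := [set ([set p.1], [set p.2]) | p in [set p : X * Y | f p.1 p.2]].
exists #|C|; apply/existsP; exists C; rewrite eqxx andbT; apply/andP; split.
  apply/forall_inP => R /imsetP [p]; rewrite inE => fp -> /=.
  apply/forall_inP => x; rewrite inE => /eqP ->.
  by apply/forall_inP => y; rewrite inE => /eqP ->.
apply/forallP => x; apply/forallP => y; apply/implyP => fxy.
apply/exists_inP; exists ([set x], [set y]); last by rewrite /= !set11.
by apply/imsetP; exists (x, y); rewrite ?inE.
Qed.

Definition C1 : nat := ex_minn one_cover_exists.

(* N^1(f) := ceil(log2 C^1(f)); equals the protocol-based N^1 up to an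
   additive constant (which is irrelevant for O(.) statements). *)
Definition N1 : nat := up_log 2 C1.
End Cover.

(* The communication problem of a language L at length n:
   Alice holds a1,a3,...,a_{2n-1}, Bob holds a2,a4,...,a_{2n},
   each a_i in Sigma ∪ {eps} (encoded as option Sigma, None = eps). *)
Definition interleave (Sigma : finType) (n : nat)
    (x y : n.-tuple (option Sigma)) : seq Sigma :=
  pmap id (flatten [seq [:: p.1; p.2] | p <- zip x y]).

Definition lang_fun (Sigma : finType) (L : lang Sigma) (n : nat) :
    n.-tuple (option Sigma) -> n.-tuple (option Sigma) -> bool :=
  fun x y => L (@interleave Sigma n x y).

Definition N1_lang (Sigma : finType) (L : lang Sigma) (n : nat) : nat :=
  N1 (@lang_fun Sigma L n).

(* A language in Com is recognised by a DFA with state set Q and is invariant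
   under permuting its input, so on any set of positions the letters held by
   Bob may be read before those held by Alice: the state the DFA reaches on
   Bob's letters is a one-message protocol, i.e. the 1-inputs are covered by
   |Q| rectangles.  A monomial
   L0 a1 L1 ... ak Lk is the union, over the at most (2n+1)^k choices of the
   positions of a1, ..., ak, of conjunctions of such conditions with the
   single-position tests "ai sits here"; hence C^1 is polynomial in n and N^1
   is logarithmic. *)
From mathcomp Require Import all_boot zify.
Set Implicit Arguments. Unset Strict Implicit. Unset Printing Implicit Defensive.

Section RectangleCovers.
Variables X Y : finType.
Implicit Types (f g : X -> Y -> bool) (rs : seq ({set X} * {set Y})).

Definition one_rect_cover f rs :=
  forall x y, f x y = has (fun R : {set X} * {set Y} => (x \in R.1) && (y \in R.2)) rs.

Definition coverable f k := exists2 rs, one_rect_cover f rs & size rs <= k.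

Lemma coverable_C1_leq f k : coverable f k -> C1 f <= k.
Proof.
case=> rs cov_rs size_rs; rewrite /C1; case: ex_minnP => m _ min_m.
apply: leq_trans (_ : #|[set R in rs]| <= k); last first.
  by rewrite cardsE; apply: leq_trans (card_size _) size_rs.
apply: min_m; apply/existsP; exists [set R in rs]; rewrite eqxx andbT.
apply/andP; split.
  apply/forall_inP => R; rewrite inE => Rrs.
  apply/forall_inP => x xR; apply/forall_inP => y yR.
  by rewrite cov_rs; apply/hasP; exists R; rewrite ?xR ?yR.
apply/forallP => x; apply/forallP => y; apply/implyP; rewrite cov_rs.
by case/hasP => R Rrs xyR; apply/exists_inP; exists R; rewrite ?inE.
Qed.

Lemma eq_coverable f g k : (forall x y, f x y = g x y) -> coverable f k -> coverable g k.
Proof. by move=> eq_fg [rs cov_rs ?]; exists rs => // x y; rewrite -eq_fg. Qed.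

Lemma coverable_leq f k k' : k <= k' -> coverable f k -> coverable f k'.
Proof. by move=> le_kk' [rs ? ?]; exists rs => //; apply: leq_trans le_kk'. Qed.

Lemma coverable_orb f g k1 k2 : coverable f k1 -> coverable g k2 ->
  coverable (fun x y => f x y || g x y) (k1 + k2).
Proof.
case=> [r1 cov1 size1] [r2 cov2 size2]; exists (r1 ++ r2).
  by move=> x y; rewrite has_cat cov1 cov2.
by rewrite size_cat leq_add.
Qed.

Lemma coverable_andb f g k1 k2 : coverable f k1 -> coverable g k2 ->
  coverable (fun x y => f x y && g x y) (k1 * k2).
Proof.
case=> [r1 cov1 size1] [r2 cov2 size2].
exists [seq (R1.1 :&: R2.1, R1.2 :&: R2.2) | R1 <- r1, R2 <- r2]; last first.
  by rewrite size_allpairs leq_mul.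
move=> x y; rewrite cov1 cov2; apply/andP/hasP.
  case=> /hasP[R1 R1r1 /andP[xR1 yR1]] /hasP[R2 R2r2 /andP[xR2 yR2]].
  exists (R1.1 :&: R2.1, R1.2 :&: R2.2); first by apply/allpairsP; exists (R1, R2).
  by rewrite /= !inE xR1 yR1 xR2 yR2.
case=> R /allpairsP[[R1 R2] [R1r1 R2r2 ->]]; rewrite /= !inE.
case/andP=> /andP[xR1 xR2] /andP[yR1 yR2].
by split; apply/hasP; [exists R1 | exists R2]; rewrite // ?xR1 ?yR1 ?xR2 ?yR2.
Qed.

Lemma coverable_has (I : eqType) (s : seq I) (f : I -> X -> Y -> bool) k :
  (forall i, i \in s -> coverable (f i) k) ->
  coverable (fun x y => has (fun i => f i x y) s) (size s * k).
Proof.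
elim: s => [|i s IHs] cov_s /=; first by exists [::].
rewrite mulSn; apply: coverable_orb; first by apply: cov_s; rewrite mem_head.
by apply: IHs => j js; apply: cov_s; rewrite inE js orbT.
Qed.

Lemma coverable_left (P : pred X) : coverable (fun x (_ : Y) => P x) 1.
Proof. by exists [:: ([set x | P x], setT)] => // x y /=; rewrite !inE orbF andbT. Qed.

Lemma coverable_right (P : pred Y) : coverable (fun (_ : X) y => P y) 1.
Proof. by exists [:: (setT, [set y | P y])] => // x y /=; rewrite !inE orbF. Qed.

End RectangleCovers.

Section Words.
Variable Sigma : finType.
Implicit Types (L P Q : lang Sigma) (w : seq Sigma).

Lemma synt_eq_perm L : (forall x y, synt_eq L (x ++ y) (y ++ x)) ->
  forall u v, perm_eq u v -> synt_eq L u v.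
Proof.
move=> comL; elim=> [|a u IHu] v; first by move/perm_size; case: v.
move=> pauv; have av : a \in v by rewrite -(perm_mem pauv) mem_head.
move: av pauv; case/splitPr => v1 v2 pauv p q.
have puv : perm_eq u (v1 ++ v2).
  by rewrite -(perm_cons a); apply: perm_trans pauv _; rewrite -cat1s perm_catCA.
have -> : p ++ (a :: u) ++ q = (p ++ [:: a]) ++ u ++ q by rewrite -catA.
rewrite (IHu _ puv) -!catA /=.
by have := comL [:: a] v1 p (v2 ++ q); rewrite -!catA.
Qed.

Lemma Com_perm_eq L : Com L -> forall u v, perm_eq u v -> L u = L v.
Proof.
by case=> _ comL u v puv; have := synt_eq_perm comL puv [::] [::]; rewrite !cats0.
Qed.

Lemma lconcat_nil P Q : lconcat P Q [::] = P [::] && Q [::].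
Proof. by apply/existsP/idP => [[[[|i] ?]]|PQ] //; exists ord0. Qed.

Lemma lconcat_cons P Q b w :
  lconcat P Q (b :: w) = (P [::] && Q (b :: w)) || lconcat (fun u => P (b :: u)) Q w.
Proof.
apply/existsP/orP => [[[[|i] lti] /= PQ]|[PQ|/existsP[[i lti] PQ]]].
- by left.
- by right; apply/existsP; exists (Ordinal (lti : i < (size w).+1)).
- by exists ord0.
- by exists (Ordinal (lti : i.+1 < (size w).+2)).
Qed.

Lemma lconcat_letter a Q w :
  lconcat (lletter a) Q w = if w is b :: w' then (b == a) && Q w' else false.
Proof.
case: w => [|b [|c w]]; rewrite ?lconcat_nil ?lconcat_cons ?lconcat_nil //.
  by rewrite /lletter eqseq_cons andbT.
rewrite /lletter /= eqseq_cons andbT; apply: orb_idr => /existsP[i].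
by rewrite eqseq_cons /= andbF.
Qed.

End Words.

Section Slots.
Variable Sigma : finType.
Implicit Types (L P Q : lang Sigma) (t : seq (option Sigma)).

(* [monomial_opt L0 s t] reads the monomial on a word with empty slots,
   guessing the slot index of each marked letter (see [monomial_pmap]). *)
Fixpoint monomial_opt L0 (s : seq (Sigma * lang Sigma)) t : bool :=
  if s is (a, L1) :: s' then
    has (fun p => L0 (pmap id (take p t)) && (nth None t p == Some a) &&
                  monomial_opt L1 s' (drop p.+1 t)) (iota 0 (size t))
  else L0 (pmap id t).

Lemma lconcat_letter_pmap P a Q t :
  lconcat P (lconcat (lletter a) Q) (pmap id t) =
  has (fun p => P (pmap id (take p t)) && (nth None t p == Some a) &&
                Q (pmap id (drop p.+1 t))) (iota 0 (size t)).
Proof.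
elim: t P => [|[b|] t IHt] P /=; first by rewrite lconcat_nil lconcat_letter andbF.
  rewrite lconcat_cons lconcat_letter IHt drop0 -andbA -(addn0 1) iotaDl has_map.
  by congr (_ || _); apply: eq_has => p; rewrite /preim /= add1n.
rewrite IHt andbF /= -(addn0 1) iotaDl has_map.
by apply: eq_has => p; rewrite /preim /= add1n.
Qed.

Lemma monomial_pmap L0 s t : monomial L0 s (pmap id t) = monomial_opt L0 s t.
Proof.
elim: s L0 t => [|[a L1] s IHs] L0 t //=.
by rewrite lconcat_letter_pmap; apply: eq_has => p; rewrite IHs.
Qed.

(* Slot [j] holds the letter a_(j+1) of the problem: even slots belong to
   Alice, odd ones to Bob. *)
Definition slot (x y : seq (option Sigma)) j :=
  if odd j then nth None y j./2 else nth None x j./2.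

Lemma interleave_slots n (x y : n.-tuple (option Sigma)) :
  interleave x y = pmap id (map (slot x y) (iota 0 n.*2)).
Proof.
rewrite /interleave; congr pmap; case: x y => [x /= /eqP <-] [y /= /eqP].
elim: x y => [|a x IHx] [|b y] //= [/IHx ->].
rewrite -(addn0 2) iotaDl -map_comp.
by congr [:: _, _ & _]; apply: eq_map => j; rewrite /slot /= add0n negbK.
Qed.

End Slots.

Lemma leq_exp2rW m n e : m <= n -> m ^ e <= n ^ e.
Proof. by move=> le_mn; elim: e => // e IHe; rewrite !expnS leq_mul. Qed.

Section SlotCovers.
Variable Sigma : finType.
Local Notation input n := (n.-tuple (option Sigma)).

Lemma Com_coverable (L : lang Sigma) : Com L -> exists K, forall n (J : seq nat),
  coverable (fun x y : input n => L (pmap id (map (slot x y) J))) K.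
Proof.
move=> ComL; have [Q [delta [q0 [F L_dfa]]]] := ComL.1.
exists #|Q| => n J.
pose alice (x : input n) := pmap id [seq nth None x j./2 | j <- J & ~~ odd j].
pose bob (y : input n) := pmap id [seq nth None y j./2 | j <- J & odd j].
have L_bob_alice (x y : input n) : L (pmap id (map (slot x y) J)) = L (bob y ++ alice x).
  apply: Com_perm_eq => //.
  have -> : bob y ++ alice x =
      pmap id (map (slot x y) ([seq j <- J | odd j] ++ [seq j <- J | ~~ odd j])).
    rewrite map_cat pmap_cat; congr (_ ++ _); congr pmap; apply/eq_in_map => j;
    by rewrite mem_filter /slot => /andP[oddj _]; rewrite ?(negbTE oddj) ?oddj.
  by apply/perm_pmap/perm_map; rewrite perm_sym perm_filterC.
have := @coverable_has _ _ _ (enum Q)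
  (fun q x y => F (foldl delta q (alice x)) && (foldl delta q0 (bob y) == q)) 1.
rewrite -cardE muln1 => cover_states; apply: eq_coverable (cover_states _) => [x y|q _].
  rewrite L_bob_alice L_dfa foldl_cat; apply/hasP/idP => [[q _ /andP[Fq /eqP ->]] //|Fq].
  by exists (foldl delta q0 (bob y)); rewrite ?mem_enum ?Fq ?eqxx.
exact: coverable_andb (coverable_left _ _) (coverable_right _ _).
Qed.

Lemma slot_coverable n j (a : Sigma) :
  coverable (fun x y : input n => slot x y j == Some a) 1.
Proof. by rewrite /slot; case: (odd j); [apply: coverable_right | apply: coverable_left]. Qed.

Lemma monomial_coverable (L0 : lang Sigma) s :
  Com L0 -> List.Forall (fun p => Com p.2) s ->
  exists K, forall n J, coverable (fun x y : input n =>
    monomial_opt L0 s (map (slot x y) J)) (K * (size J).+1 ^ size s).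
Proof.
elim: s L0 => [|[a L1] s IHs] L0 ComL0 Com_s.
  have [K cover_L0] := Com_coverable ComL0.
  by exists K => n J; rewrite expn0 muln1; apply: cover_L0.
have /List.Forall_cons_iff [ComL1 Com_s'] := Com_s.
have [K0 cover_L0] := Com_coverable ComL0; have [K' cover_s] := IHs L1 ComL1 Com_s'.
exists (K0 * K') => n J /=; set S := (size J).+1.
apply: (@coverable_leq _ _ _ (size (iota 0 (size J)) * (K0 * 1 * (K' * S ^ size s)))).
  rewrite size_iota expnSr muln1 mulnC !mulnA leq_mul2l ltnW ?orbT //.
apply: eq_coverable (coverable_has _) => [x y|p _].
  rewrite size_map; apply: eq_in_has => p; rewrite mem_iota add0n => /andP[_ ltpJ].
  by rewrite -map_take -map_drop (nth_map 0).
apply: coverable_andb; first exact: coverable_andb (cover_L0 _ _) (slot_coverable _ _ _).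
apply: coverable_leq (cover_s _ _); rewrite leq_mul2l leq_exp2rW ?orbT //.
by rewrite ltnS size_drop leq_subr.
Qed.

Lemma monomial_union_coverable (ms : seq (lang Sigma * seq (Sigma * lang Sigma))) :
  List.Forall (fun m => Com m.1 /\ List.Forall (fun p => Com p.2) m.2) ms ->
  exists K d, forall n J, coverable (fun x y : input n =>
    has (fun m => monomial_opt m.1 m.2 (map (slot x y) J)) ms) (K * (size J).+1 ^ d).
Proof.
elim: ms => [|m ms IHms] Com_ms; first by exists 0, 0 => n J; exists [::].
have /List.Forall_cons_iff [[ComL0 Com_s] Com_ms'] := Com_ms.
have [K1 cover_m] := monomial_coverable ComL0 Com_s.
have [K2 [d2 cover_ms]] := IHms Com_ms'.
exists (K1 + K2), (size m.2 + d2) => n J /=.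
apply: coverable_leq (coverable_orb (cover_m n J) (cover_ms n J)).
by rewrite mulnDl leq_add // leq_mul2l leq_pexp2l ?orbT ?leq_addr ?leq_addl.
Qed.

End SlotCovers.

Lemma poly_leq_exp_up_log K d n : 1 < n ->
  K * (n.*2).+1 ^ d <= 2 ^ ((K + 3 * d) * up_log 2 n).
Proof.
move=> lt1n; set u := up_log 2 n.
have u_gt0 : 0 < u by rewrite up_log_gt0.
have le_n_2u : n <= 2 ^ u by apply: up_logP.
have le_2n1 : (n.*2).+1 <= 2 ^ (3 * u).
  apply: (@leq_trans (2 ^ (u + 2))); last by rewrite leq_exp2l //; lia.
  by rewrite expnD; move: (2 ^ u) le_n_2u => E; lia.
apply: (@leq_trans (2 ^ K * (2 ^ (3 * u)) ^ d)).
  by apply: leq_mul; [apply/ltnW/ltn_expl | apply: leq_exp2rW].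
rewrite -expnM -expnD leq_exp2l // mulnDl leq_add ?leq_pmulr //.
by rewrite mulnAC.
Qed.

Theorem mainTheorem8 (Sigma : finType) (L : lang Sigma) :
  PolCom L ->
  exists (c n0 : nat), forall n, n0 <= n -> N1_lang L n <= c * up_log 2 n.
Proof.
case=> ms [Com_ms L_ms]; have [K [d cover_ms]] := monomial_union_coverable Com_ms.
exists (K + 3 * d), 2 => n lt1n.
have cover_L : coverable (@lang_fun _ L n) (K * (n.*2).+1 ^ d).
  have := cover_ms n (iota 0 n.*2); rewrite size_iota; apply: eq_coverable => x y.
  rewrite /lang_fun L_ms interleave_slots /monomial_union.
  by apply: eq_has => m; rewrite monomial_pmap.
rewrite /N1_lang /N1 up_log_min //.
exact: leq_trans (coverable_C1_leq cover_L) (poly_leq_exp_up_log K d lt1n).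
Qed.
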